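(* Work on $\mathbb R^5$ with coordinates $x_1,\dots,x_5$ and the objects defined in the context. For $\mathbf w\in\{\mathbf u,\mathbf v\}$ the following two sets of formal vector fields are equal: $\{F_1\,\partial\,\mathbf w+F_2\,(b,\mathbf w)^{(1)}+F_3\,(a,\mathbf w)^{(1)}: F_1,F_2\in\mathcal R[[a,b]],\ F_3\in\mathcal R[[a]]\}$ and $\{G_1\,(b,\mathbf w)^{(1)}+G_2\,(a,\mathbf w)^{(1)}: G_1,G_2\in\mathcal R[[a,b]]\}$.
   Context: Let $N=\mathrm{diag}(N_2,N_3)$ be the $5\times5$ nilpotent matrix in upper Jordan form with blocks of sizes 2 and 3, $M=\mathrm{diag}(M_2,M_3)$ with $M_2=\begin{pmatrix}0&0\\1&0\end{pmatrix}$, $M_3=\begin{pmatrix}0&0&0\\2&0&0\\0&2&0\end{pmatrix}$, and $H=\mathrm{diag}(1,-1,2,0,-2)$. With $\mathcal D_Af(\mathbf x)=f'(\mathbf x)A\mathbf x$, put $\mathcal Y=\mathcal D_{M^*}=x_2\partial_{x_1}+2x_4\partial_{x_3}+2x_5\partial_{x_4}$. Invariants (elements of $\ker\mathcal D_{N^*}$, weights w.r.t. $\mathcal D_H$): $a=x_1$ (weight 1), $b=x_3$ (weight 2), $c=x_4^2-2x_3x_5$ (weight 0), $\partial=(a,b)^{(1)}=\widehat a\,a\,\mathcal Yb-\widehat b(\mathcal Ya)b=2x_1x_4-2x_2x_3$ (weight 1), $e=(a^2,b)^{(2)}=8x_1^2x_5-8x_1x_2x_4+4x_2^2x_3$ (weight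 0). $\mathcal R=\mathbb R[[c,e]]$, and $\mathcal R[[a,b]]$ (resp. $\mathcal R[[a]]$) denotes the set of all $F(a,b,c,e)$ (resp. $F(a,c,e)$) for formal power series $F$. Let $\mathbf u=\mathbf e_2$ (weight 1) and $\mathbf v=\mathbf e_5$ (weight 2), standard basis vectors. For an invariant $f$ of weight $\widehat f\ge1$ and $\mathbf w\in\{\mathbf u,\mathbf v\}$ of weight $\widehat{\mathbf w}$, $(f,\mathbf w)^{(1)}=-\widehat f\,f\,M^*\mathbf w-\widehat{\mathbf w}(\mathcal Yf)\mathbf w$; explicitly $(a,\mathbf u)^{(1)}=-(x_1\mathbf e_1+x_2\mathbf e_2)$, $(b,\mathbf u)^{(1)}=-(2x_3\mathbf e_1+2x_4\mathbf e_2)$, $(a,\mathbf v)^{(1)}=-(2x_1\mathbf e_4+2x_2\mathbf e_5)$, $(b,\mathbf v)^{(1)}=-(4x_3\mathbf e_4+4x_4\mathbf e_5)$. *)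

From HB Require Import structures.
From mathcomp Require Import all_boot all_order all_algebra.
From mathcomp Require Import mpoly.
From mathcomp Require Import reals.
Set Implicit Arguments. Unset Strict Implicit. Unset Printing Implicit Defensive.
Import Order.TTheory GRing.Theory Num.Theory.
Local Open Scope ring_scope.

(* Formal power series in n variables over R: coefficient functions on
   monomials (exponent vectors) 'X_{1..n}. *)
Definition series (R : realType) (n : nat) := 'X_{1..n} -> R.

Definition trunc (R : realType) (n d : nat) (F : series R n) : {mpoly R[n]} :=
  \sum_(m : 'X_{1..n < d.+1}) F m *: 'X_[m].

(* Substitution F(g_1,...,g_n) of polynomials g_i in x_1..x_5 WITH ZERO
   CONSTANT TERM into a power series F: the coefficient of x^m only depends
   on the part of F of degree <= |m|. *)
Definition subst (R : realType) (n : nat) (g : n.-tuple {mpoly R[5]})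
  (F : series R n) : series R 5 :=
  fun m => (comp_mpoly g (trunc (mdeg m) F))@_m.

Definition smul (R : realType) (F : series R 5) (p : {mpoly R[5]}) : series R 5 :=
  fun m => (trunc (mdeg m) F * p)@_m.

(* Coordinates: x_{k+1} is 'X_k, k = 0..4. *)
Definition xx (R : realType) (k : nat) : {mpoly R[5]} := 'X_(inord k).

Definition inv_a (R : realType) : {mpoly R[5]} := xx R 0.
Definition inv_b (R : realType) : {mpoly R[5]} := xx R 2.
Definition inv_c (R : realType) : {mpoly R[5]} :=
  xx R 3 ^+ 2 - 2%:R * xx R 2 * xx R 4.
Definition inv_d (R : realType) : {mpoly R[5]} :=
  2%:R * xx R 0 * xx R 3 - 2%:R * xx R 1 * xx R 2.
Definition inv_e (R : realType) : {mpoly R[5]} :=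
  8%:R * xx R 0 ^+ 2 * xx R 4 - 8%:R * xx R 0 * xx R 1 * xx R 3
  + 4%:R * xx R 1 ^+ 2 * xx R 2.

Definition abce (R : realType) : 4.-tuple {mpoly R[5]} :=
  [tuple inv_a R; inv_b R; inv_c R; inv_e R].
Definition ace (R : realType) : 3.-tuple {mpoly R[5]} :=
  [tuple inv_a R; inv_c R; inv_e R].

(* The two vectors u = e_2, v = e_5. *)
Inductive wvec := wU | wV.

Definition widx (w : wvec) : nat := if w is wU then 1%N else 4%N.

(* Polynomial vector fields: component i (0-based, i.e. coefficient of e_{i+1}). *)
Definition pvf (R : realType) := 'I_5 -> {mpoly R[5]}.

Definition d_w (R : realType) (w : wvec) : pvf R :=
  fun i => if (i : nat) == widx w then inv_d R else 0.

Definition a_w (R : realType) (w : wvec) : pvf R :=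
  fun i => match w with
  | wU => nth 0 [:: - xx R 0; - xx R 1; 0; 0; 0] i
  | wV => nth 0 [:: 0; 0; 0; - (2%:R * xx R 0); - (2%:R * xx R 1)] i
  end.

Definition b_w (R : realType) (w : wvec) : pvf R :=
  fun i => match w with
  | wU => nth 0 [:: - (2%:R * xx R 2); - (2%:R * xx R 3); 0; 0; 0] i
  | wV => nth 0 [:: 0; 0; 0; - (4%:R * xx R 2); - (4%:R * xx R 3)] i
  end.

Definition fvf (R : realType) := 'I_5 -> series R 5.

Definition vfset_first (R : realType) (w : wvec) (X : fvf R) : Prop :=
  exists (F1 F2 : series R 4) (F3 : series R 3),
    forall (i : 'I_5) (m : 'X_{1..5}),
      X i m = smul (subst (abce R) F1) (d_w R w i) m
            + smul (subst (abce R) F2) (b_w R w i) m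
            + smul (subst (ace R) F3) (a_w R w i) m.

Definition vfset_second (R : realType) (w : wvec) (X : fvf R) : Prop :=
  exists (G1 G2 : series R 4),
    forall (i : 'I_5) (m : 'X_{1..5}),
      X i m = smul (subst (abce R) G1) (b_w R w i) m
            + smul (subst (abce R) G2) (a_w R w i) m.

From HB Require Import structures.
From mathcomp Require Import all_boot all_order all_algebra.
From mathcomp Require Import mpoly.
From mathcomp Require Import reals.
From mathcomp Require Import ring.
Set Implicit Arguments. Unset Strict Implicit. Unset Printing Implicit Defensive.
Import Order.TTheory GRing.Theory Num.Theory.
Local Open Scope ring_scope.

(* Since [d = 2 (x1 x4 - x2 x3)], a direct computation gives
   [mu d w = 2 b (a,w)^(1) - a (b,w)^(1)], with [mu = 1] for [u] and [mu = 2]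
   for [v].  Hence [F1 d w] is absorbed into the other two terms, and as
   [F3(a,c,e)] is a series in [a,b,c,e] the first set lies in the second.
   Conversely, write [G2 = Z(a,c,e) + b H(a,b,c,e)]; then
   [b H (a,w)^(1) = H/2 (mu d w + a (b,w)^(1))] lies in the first set.
   Since the substituted invariants have no constant term, the coefficient of
   [x^m] in each expression only involves truncations to degree [|m|], where
   all of the above is polynomial algebra. *)

Section LowOrder.
Variables (R : nzRingType) (n : nat).
Implicit Types (p q r : {mpoly R[n]}).

Definition vanish_below k p := forall m : 'X_{1..n}, (mdeg m < k)%N -> p@_m = 0.

Definition agree_upto d p q := forall m : 'X_{1..n}, (mdeg m <= d)%N -> p@_m = q@_m.

Lemma vanish_below1 p : p@_0 = 0 -> vanish_below 1 p.
Proof. by move=> p0 m; rewrite ltnS leqn0 mdeg_eq0 => /eqP ->. Qed.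

Lemma vanish_belowW a b p : (b <= a)%N -> vanish_below a p -> vanish_below b p.
Proof. by move=> le_ba pa m lt_mb; apply/pa/(leq_trans lt_mb). Qed.

Lemma vanish_below0 a : vanish_below a (0 : {mpoly R[n]}).
Proof. by move=> m _; rewrite mcoeff0. Qed.

Lemma vanish_belowD a p q :
  vanish_below a p -> vanish_below a q -> vanish_below a (p + q).
Proof. by move=> pa qa m lt_ma; rewrite mcoeffD pa ?qa ?addr0. Qed.

Lemma vanish_belowZ a c p : vanish_below a p -> vanish_below a (c *: p).
Proof. by move=> pa m lt_ma; rewrite mcoeffZ pa ?mulr0. Qed.

Lemma vanish_belowM a b p q :
  vanish_below a p -> vanish_below b q -> vanish_below (a + b) (p * q).
Proof.
move=> pa qb m lt_m; rewrite mcoeffM big1 // => k /eqP def_m.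
have : (mdeg k.1 + mdeg k.2 < a + b)%N by rewrite -mdegD -def_m.
case: (ltnP (mdeg k.1) a) => [/pa->|le1]; first by rewrite mul0r.
case: (ltnP (mdeg k.2) b) => [/qb->|le2]; first by rewrite mulr0.
by rewrite ltnNge leq_add.
Qed.

Lemma vanish_belowX a p : vanish_below 1 p -> vanish_below a (p ^+ a).
Proof.
move=> p1; elim: a => [|a IHa]; first by [].
by rewrite exprS -add1n; apply: vanish_belowM.
Qed.

Lemma agree_uptoP d p q : agree_upto d p q <-> vanish_below d.+1 (p - q).
Proof.
split=> [pq m le_md | pq m le_md]; first by rewrite mcoeffB pq ?subrr.
by apply/eqP; rewrite -subr_eq0 -mcoeffB pq.
Qed.

Lemma agree_upto_sym d p q : agree_upto d p q -> agree_upto d q p.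
Proof. by move=> pq m le_md; rewrite pq. Qed.

Lemma agree_upto_trans d p q r :
  agree_upto d p q -> agree_upto d q r -> agree_upto d p r.
Proof. by move=> pq qr m le_md; rewrite pq ?qr. Qed.

Lemma agree_uptoD d p q p' q' :
  agree_upto d p q -> agree_upto d p' q' -> agree_upto d (p + p') (q + q').
Proof. by move=> pq pq' m le_md; rewrite !mcoeffD pq ?pq'. Qed.

Lemma agree_uptoB d p q p' q' :
  agree_upto d p q -> agree_upto d p' q' -> agree_upto d (p - p') (q - q').
Proof. by move=> pq pq' m le_md; rewrite !mcoeffB pq ?pq'. Qed.

Lemma agree_uptoZ d c p q : agree_upto d p q -> agree_upto d (c *: p) (c *: q).
Proof. by move=> pq m le_md; rewrite !mcoeffZ pq. Qed.

Lemma agree_uptoMl d r p q : agree_upto d p q -> agree_upto d (r * p) (r * q).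
Proof.
move=> pq m le_md; rewrite !mcoeffM; apply: eq_bigr => k /eqP def_m.
have deg_m : mdeg m = (mdeg k.1 + mdeg k.2)%N by rewrite -mdegD -def_m.
have := leq_addl (mdeg k.1) (mdeg k.2); rewrite -deg_m => le_k.
by rewrite pq // (leq_trans le_k le_md).
Qed.

Lemma agree_uptoMr d r p q : agree_upto d p q -> agree_upto d (p * r) (q * r).
Proof.
move=> pq m le_md; rewrite !mcoeffM; apply: eq_bigr => k /eqP def_m.
have deg_m : mdeg m = (mdeg k.1 + mdeg k.2)%N by rewrite -mdegD -def_m.
have := leq_addr (mdeg k.2) (mdeg k.1); rewrite -deg_m => le_k.
by rewrite pq // (leq_trans le_k le_md).
Qed.

Implicit Types (fam : nat -> {mpoly R[n]}).

Definition coherent fam := forall d d', (d <= d')%N -> agree_upto d (fam d) (fam d').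

Lemma coherentD fam fam' :
  coherent fam -> coherent fam' -> coherent (fun d => fam d + fam' d).
Proof. by move=> cf cf' d d' le_dd'; apply: agree_uptoD; [apply: cf | apply: cf']. Qed.

Lemma coherentB fam fam' :
  coherent fam -> coherent fam' -> coherent (fun d => fam d - fam' d).
Proof. by move=> cf cf' d d' le_dd'; apply: agree_uptoB; [apply: cf | apply: cf']. Qed.

Lemma coherentZ c fam : coherent fam -> coherent (fun d => c *: fam d).
Proof. by move=> cf d d' le_dd'; apply/agree_uptoZ/cf. Qed.

Lemma coherentMl r fam : coherent fam -> coherent (fun d => r * fam d).
Proof. by move=> cf d d' le_dd'; apply/agree_uptoMl/cf. Qed.

End LowOrder.

Section Composition.
Variables (R : nzRingType) (n k : nat) (g : n.-tuple {mpoly R[k]}).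
Implicit Types (P Q : {mpoly R[n]}).

Lemma comp_mpoly_free (j : 'I_n) (h : n.-tuple {mpoly R[k]}) P :
    (forall m : 'X_{1..n}, m j != 0%N -> P@_m = 0) ->
    (forall i, i != j -> tnth g i = tnth h i) ->
  P \mPo g = P \mPo h.
Proof.
move=> Pj gh; rewrite !comp_mpolyE; apply: eq_big_seq => m.
rewrite mcoeff_msupp => Pm; congr (_ *: _); apply: eq_bigr => i _.
have [->|/gh -> //] := eqVneq i j.
by have /eqP -> : m j == 0%N by apply: contraTT Pm => /Pj ->; rewrite eqxx.
Qed.

Hypothesis g0 : forall i, (tnth g i)@_0 = 0.

Lemma vanish_below_comp a P : vanish_below a P -> vanish_below a (P \mPo g).
Proof.
move=> Pa; rewrite comp_mpolyE big_seq.
apply: (big_ind (vanish_below a)); [exact: vanish_below0 | exact: vanish_belowD |].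
move=> m; rewrite mcoeff_msupp => Pm; apply: vanish_belowZ.
have le_am : (a <= mdeg m)%N.
  by rewrite leqNgt; apply: contraTN Pm => /Pa ->; rewrite eqxx.
apply: vanish_belowW le_am _; rewrite mdegE.
apply: (big_ind2 (@vanish_below _ _)) => [//|x1 x2 y1 y2|i _].
  exact: vanish_belowM.
exact/vanish_belowX/vanish_below1/g0.
Qed.

Lemma agree_upto_comp d P Q :
  agree_upto d P Q -> agree_upto d (P \mPo g) (Q \mPo g).
Proof.
move=> /agree_uptoP PQ; apply/agree_uptoP.
by rewrite -comp_mpolyB; apply: vanish_below_comp.
Qed.

Lemma coherent_comp (fam : nat -> {mpoly R[n]}) :
  coherent fam -> coherent (fun d => fam d \mPo g).
Proof. by move=> cf d d' le_dd'; apply/agree_upto_comp/cf. Qed.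

End Composition.

Lemma comp_mpolyA (R : comNzRingType) n k l (g : n.-tuple {mpoly R[k]})
    (h : k.-tuple {mpoly R[l]}) (P : {mpoly R[n]}) :
  (P \mPo g) \mPo h = P \mPo [tuple tnth g i \mPo h | i < n].
Proof.
rewrite (comp_mpolyE P g) (comp_mpolyE P) raddf_sum /=; apply: eq_bigr => m _.
rewrite comp_mpolyZ rmorph_prod /=; congr (_ *: _); apply: eq_bigr => i _.
by rewrite rmorphXn /= tnth_mktuple.
Qed.

Lemma mcoeffXM (R : comNzRingType) n (k : 'I_n) (P : {mpoly R[n]}) m :
  ('X_k * P)@_m = if m k == 0%N then 0 else P@_(m - U_(k))%MM.
Proof.
have [mk0|mk_gt0] := eqVneq (m k) 0%N; last first.
  have le_km : (U_(k) <= m)%MM by rewrite lep1mP.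
  by rewrite -{1}(submK le_km) mulrC addmC mcoeffMX.
rewrite mcoeffM big1 // => -[i j] /eqP /= def_m; rewrite mcoeffX.
case: eqP => [def_i|]; last by rewrite mul0r.
have := congr1 (fun mm : 'X_{1..n} => mm k) def_m.
by rewrite /= mnmDE -def_i mnm1E eqxx mk0 add1n.
Qed.

Lemma mpolyCV_nat (F : numFieldType) n k :
  (k > 0)%N -> ((k%:R)^-1)%:MP * k%:R = 1 :> {mpoly F[n]}.
Proof.
move=> k_gt0; rewrite -(rmorph_nat (@mpolyC n F)) -rmorphM.
by rewrite mulVf ?pnatr_eq0 -?lt0n ?rmorph1.
Qed.

Section Truncation.
Variables (R : realType) (n : nat).
Implicit Types (F G : series R n) (fam : nat -> {mpoly R[n]}).

Lemma mcoeff_trunc d F m : (trunc d F)@_m = if (mdeg m <= d)%N then F m else 0.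
Proof.
rewrite /trunc raddf_sum /=.
under eq_bigr => m' _ do rewrite mcoeffZ mcoeffX.
case: ifP => le_md.
  rewrite (bigD1 (BMultinom (le_md : mdeg m < d.+1)%N)) //= eqxx mulr1.
  rewrite big1 ?addr0 // => m' ne_m'm; case: eqP => [def_m|]; last by rewrite mulr0.
  by move: ne_m'm; rewrite bmeqP /= def_m eqxx.
rewrite big1 // => m' _; case: eqP => [def_m|]; last by rewrite mulr0.
by move: (bmdeg m'); rewrite def_m ltnS le_md.
Qed.

Definition series_of fam : series R n := fun m => (fam (mdeg m))@_m.

Lemma trunc_series_of fam d :
  coherent fam -> agree_upto d (fam d) (trunc d (series_of fam)).
Proof.
by move=> cf m le_md; rewrite mcoeff_trunc le_md /series_of (cf _ _ le_md).
Qed.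

Lemma coherent_trunc F : coherent (fun d => trunc d F).
Proof.
by move=> d d' le_dd' m le_md; rewrite !mcoeff_trunc le_md (leq_trans le_md).
Qed.

Lemma trunc_splitX (k : 'I_n) G : exists Z H : series R n,
  (forall m : 'X_{1..n}, m k != 0%N -> Z m = 0) /\
  forall d, agree_upto d (trunc d Z + 'X_k * trunc d H) (trunc d G).
Proof.
exists (fun m : 'X_{1..n} => if m k == 0%N then G m else 0).
exists (fun m => G (m + U_(k))%MM).
split=> [m /negbTE -> // | d m le_md].
rewrite mcoeffD mcoeffXM !mcoeff_trunc le_md.
have [_|mk_gt0] := eqVneq (m k) 0%N; first by rewrite addr0.
by rewrite add0r (leq_trans (mdegB _ _) le_md) submK // lep1mP.
Qed.

End Truncation.

Section Products.
Variables (R : realType) (k : nat) (g : k.-tuple {mpoly R[5]}).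
Hypothesis g0 : forall i, (tnth g i)@_0 = 0.
Implicit Types (F : series R k) (P : {mpoly R[k]}) (p : {mpoly R[5]}).

Lemma smul_substE F P p m :
  agree_upto (mdeg m) P (trunc (mdeg m) F) ->
  smul (subst g F) p m = ((P \mPo g) * p)@_m.
Proof.
move=> PF; apply: (@agree_uptoMr _ _ (mdeg m)) => //.
have cF : coherent (fun d => trunc d F \mPo g) by apply/coherent_comp/coherent_trunc.
apply: agree_upto_trans (agree_upto_sym (trunc_series_of cF)) _.
exact/agree_upto_comp/agree_upto_sym.
Qed.

Lemma smul_subst F p m :
  smul (subst g F) p m = ((trunc (mdeg m) F \mPo g) * p)@_m.
Proof. exact: smul_substE. Qed.

Lemma smul_subst_series_of (fam : nat -> {mpoly R[k]}) : coherent fam ->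
  forall p m, smul (subst g (series_of fam)) p m = ((fam (mdeg m) \mPo g) * p)@_m.
Proof. by move=> cf p m; apply/smul_substE/trunc_series_of. Qed.

End Products.

Section Invariants.
Variable R : realType.

Lemma xx_const0 k : (xx R k)@_0 = 0.
Proof. by rewrite mcoeffX mnm1_eq0. Qed.

Lemma abce_const0 i : (tnth (abce R) i)@_0 = 0.
Proof.
case: i => -[|[|[|[|//]]]] lt_i4; rewrite /tnth /= /inv_a /inv_b /inv_c /inv_e;
  by rewrite ?(rmorphB, rmorphD, rmorphM, rmorphXn) /= !xx_const0
             ?(mulr0, expr0n, subr0, addr0).
Qed.

Lemma ace_const0 i : (tnth (ace R) i)@_0 = 0.
Proof.
case: i => -[|[|[|//]]] lt_i3; rewrite /tnth /= /inv_a /inv_c /inv_e;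
  by rewrite ?(rmorphB, rmorphD, rmorphM, rmorphXn) /= !xx_const0
             ?(mulr0, expr0n, subr0, addr0).
Qed.

Definition forget_b : 3.-tuple {mpoly R[4]} :=
  [tuple 'X_(inord 0); 'X_(inord 2); 'X_(inord 3)].

Definition drop_b : 4.-tuple {mpoly R[3]} :=
  [tuple 'X_(inord 0); 0; 'X_(inord 1); 'X_(inord 2)].

Lemma comp_Xa : 'X_(inord 0) \mPo abce R = inv_a R.
Proof. by rewrite comp_mpolyXU inordK. Qed.

Lemma comp_Xb : 'X_(inord 1) \mPo abce R = inv_b R.
Proof. by rewrite comp_mpolyXU inordK. Qed.

Lemma forget_b_const0 i : (tnth forget_b i)@_0 = 0.
Proof. by case: i => -[|[|[|//]]] lt_i3; rewrite /tnth /= mcoeffX mnm1_eq0. Qed.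

Lemma drop_b_const0 i : (tnth drop_b i)@_0 = 0.
Proof.
by case: i => -[|[|[|[|//]]]] lt_i4; rewrite /tnth /= ?mcoeff0 // mcoeffX mnm1_eq0.
Qed.

Lemma comp_forget_b : [tuple tnth forget_b i \mPo abce R | i < 3] = ace R.
Proof.
apply: eq_from_tnth => i; rewrite tnth_mktuple.
by case: i => -[|[|[|//]]] lt_i3; rewrite /tnth /= comp_mpolyXU inordK.
Qed.

Lemma comp_drop_b (P : {mpoly R[4]}) :
  (forall m : 'X_{1..4}, m (inord 1) != 0%N -> P@_m = 0) ->
  (P \mPo drop_b) \mPo ace R = P \mPo abce R.
Proof.
move=> Pb; rewrite comp_mpolyA; apply: comp_mpoly_free Pb _ => i.
rewrite tnth_mktuple; case: i => -[|[|[|[|//]]]] lt_i4;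
  rewrite /tnth /= ?comp_mpolyXU ?inordK // => /eqP[].
by apply: val_inj; rewrite /= inordK.
Qed.

End Invariants.

Definition mu (w : wvec) : nat := if w is wU then 1 else 2.

Section Absorption.
Variables (R : realType) (w : wvec) (i : 'I_5).
Implicit Type A : {mpoly R[5]}.

Lemma mu_d_w :
  (mu w)%:R * d_w R w i = 2%:R * (inv_b R * a_w R w i) - inv_a R * b_w R w i.
Proof.
by case: w; case: i => -[|[|[|[|[|//]]]]] lt_i5;
  rewrite /d_w /a_w /b_w /inv_d /inv_a /inv_b /=; ring.
Qed.

Lemma d_w_absorb A :
  A * d_w R w i = (- ((mu w)%:R^-1 *: (inv_a R * A))) * b_w R w i
                  + ((mu w)%:R^-1 *: (2%:R * inv_b R * A)) * a_w R w i.
Proof.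
have cmu : ((mu w)%:R^-1)%:MP * (mu w)%:R = 1 :> {mpoly R[5]}.
  by apply: mpolyCV_nat; case: w.
rewrite -!mul_mpolyC; set c := _%:MP.
have -> : A * d_w R w i = (c * (mu w)%:R) * (A * d_w R w i).
  by rewrite cmu mul1r.
transitivity (c * A * ((mu w)%:R * d_w R w i)); first by ring.
by rewrite mu_d_w; ring.
Qed.

Lemma b_a_w_absorb A :
  (inv_b R * A) * a_w R w i = (2^-1 *: ((mu w)%:R * A)) * d_w R w i
                              + (2^-1 *: (inv_a R * A)) * b_w R w i.
Proof.
have c2 := @mpolyCV_nat R 5 2 isT.
rewrite -!mul_mpolyC; set c := _%:MP.
have -> : inv_b R * A * a_w R w i = (c * 2%:R) * (inv_b R * A * a_w R w i).
  by rewrite c2 mul1r.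
transitivity (c * A * (2%:R * (inv_b R * a_w R w i))); first by ring.
by rewrite -(subrK (inv_a R * b_w R w i) (2%:R * _)) -mu_d_w; ring.
Qed.

End Absorption.

Section Inclusions.
Variables (R : realType) (w : wvec) (X : fvf R).

Lemma vfset_first_second : vfset_first w X -> vfset_second w X.
Proof.
case=> F1 [F2 [F3 defX]]; set c : R := (mu w)%:R^-1.
pose fam1 d := trunc d F2 - c *: ('X_(inord 0) * trunc d F1).
pose fam2 d := trunc d F3 \mPo forget_b R + c *: (2%:R * 'X_(inord 1) * trunc d F1).
have cf1 : coherent fam1.
  by apply/coherentB/coherentZ/coherentMl; apply: coherent_trunc.
have cf2 : coherent fam2.
  apply/coherentD/coherentZ/coherentMl/coherent_trunc.
  exact/coherent_comp/coherent_trunc/forget_b_const0.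
exists (series_of fam1), (series_of fam2) => i m.
rewrite (smul_subst_series_of (@abce_const0 R) cf1).
rewrite (smul_subst_series_of (@abce_const0 R) cf2).
rewrite defX !(smul_subst (@abce_const0 R)) (smul_subst (@ace_const0 R)).
rewrite -!mcoeffD; congr mcoeff.
rewrite /fam1 /fam2 comp_mpolyB comp_mpolyD !comp_mpolyZ !rmorphM rmorph_nat /=.
rewrite comp_mpolyA comp_forget_b comp_Xa comp_Xb d_w_absorb.
ring.
Qed.

Lemma vfset_second_first : vfset_second w X -> vfset_first w X.
Proof.
case=> G1 [G2 defX].
have [Z [H [Zb splitG2]]] := trunc_splitX (inord 1) G2.
pose fam1 d := 2^-1 *: ((mu w)%:R * trunc d H).
pose fam2 d := trunc d G1 + 2^-1 *: ('X_(inord 0) * trunc d H).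
pose fam3 d := trunc d Z \mPo drop_b R.
have cf1 : coherent fam1 by apply/coherentZ/coherentMl/coherent_trunc.
have cf2 : coherent fam2.
  by apply/coherentD/coherentZ/coherentMl; apply: coherent_trunc.
have cf3 : coherent fam3 by apply/coherent_comp/coherent_trunc/drop_b_const0.
exists (series_of fam1), (series_of fam2), (series_of fam3) => i m.
rewrite (smul_subst_series_of (@abce_const0 R) cf1).
rewrite (smul_subst_series_of (@abce_const0 R) cf2).
rewrite (smul_subst_series_of (@ace_const0 R) cf3).
rewrite defX (smul_subst (@abce_const0 R)).
rewrite (smul_substE (@abce_const0 R) _ (splitG2 _)).
rewrite -!mcoeffD; congr mcoeff.
rewrite /fam1 /fam2 /fam3 comp_drop_b; last first.
  by move=> m' /Zb Zm'; rewrite mcoeff_trunc Zm'; case: ifP.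
rewrite !comp_mpolyD !comp_mpolyZ !rmorphM rmorph_nat /= comp_Xa comp_Xb.
rewrite [(_ + inv_b R * _) * _]mulrDl b_a_w_absorb.
ring.
Qed.

End Inclusions.

Theorem lemma17p12 (R : realType) (w : wvec) (X : fvf R) :
  vfset_first w X <-> vfset_second w X.
Proof. by split; [apply: vfset_first_second | apply: vfset_second_first]. Qed.
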